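(* Let $m\ge 2$, let $\mathcal{A}\in\mathbb{C}^{n_1\times\cdots\times n_m}$ be a nonzero complex tensor, and let $\mathcal{B}\in\mathbb{R}^{2n_1\times\cdots\times 2n_m}$ be the real tensor such that for all $x^{(i)},y^{(i)}\in\mathbb{R}^{n_i}$, writing $u^{(i)}=(x^{(i)},y^{(i)})\in\mathbb{R}^{2n_i}$, $$\langle\mathcal{B},\otimes_{i=1}^m u^{(i)}\rangle=\mathrm{Re}\,\big\langle\mathcal{A},\otimes_{i=1}^m (x^{(i)}+\sqrt{-1}\,y^{(i)})\big\rangle .$$ Suppose $(\hat u^{(1)},\dots,\hat u^{(m-1)})$, $\hat u^{(i)}\in\mathbb{R}^{2n_i}$, is a maximizer of $$\max\ \big\|\langle\mathcal{B},u^{(1)}\otimes\cdots\otimes u^{(m-1)}\rangle\big\|\quad\text{s.t. } u^{(i)}\in\mathbb{R}^{2n_i},\ \|u^{(i)}\|=1,\ i=1,\dots,m-1,$$ and let $\lambda$ be its maximal value. Define $\hat u^{(m)}=\langle\mathcal{B},\hat u^{(1)}\otimes\cdots\otimes\hat u^{(m-1)}\rangle/\lambda\in\mathbb{R}^{2n_m}$, write $\hat u^{(i)}=(\hat x^{(i)},\hat y^{(i)})$ with $\hat x^{(i)},\hat y^{(i)}\in\mathbb{R}^{n_i}$, and set $\hat z^{(i)}=\hat x^{(i)}+\sqrt{-1}\,\hat y^{(i)}$ for $i=1,\dots,m$. Then $\lambda$ is the largest U-eigenvalue of $\mathcal{A}$ and $(\hat z^{(1)},\dots,\hat z^{(m)})$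 is a tuple of U-eigenvectors associated with $\lambda$.
   Context: For complex tensors, $\langle\mathcal{A},\mathcal{C}\rangle=\sum_{i_1,\dots,i_m}\overline{\mathcal{A}_{i_1\cdots i_m}}\,\mathcal{C}_{i_1\cdots i_m}$, and $\otimes_{i=1}^m z^{(i)}$ is the rank-one tensor with entries $z^{(1)}_{i_1}\cdots z^{(m)}_{i_m}$. For the real tensor $\mathcal{B}$, $\langle\mathcal{B},u^{(1)}\otimes\cdots\otimes u^{(m-1)}\rangle$ denotes the vector in $\mathbb{R}^{2n_m}$ with $j$-th component $\sum_{i_1,\dots,i_{m-1}}\mathcal{B}_{i_1\cdots i_{m-1}j}\,u^{(1)}_{i_1}\cdots u^{(m-1)}_{i_{m-1}}$. For $k\in\{1,\dots,m\}$, $\langle \mathcal{A},\otimes_{i=1,i\ne k}^m z^{(i)}\rangle$ denotes the vector in $\mathbb{C}^{n_k}$ whose $i_k$-th component is $\sum_{i_j,\, j\neq k} \overline{\mathcal{A}_{i_1\cdots i_m}}\, \prod_{j\ne k} z^{(j)}_{i_j}$. A real number $\lambda$ is a U-eigenvalue of $\mathcal{A}$, with U-eigenvector tuple $(x^{(1)},\dots,x^{(m)})$, if $x^{(i)}\in\mathbb{C}^{n_i}$, $\|x^{(i)}\|=1$ for all $i$, and $\langle \mathcal{A},\otimes_{i=1,i\ne k}^m x^{(i)}\rangle=\lambda\, \overline{x^{(k)}}$ for every $k=1,\dots,m$ (entrywise complex conjugate on the right). All norms on vectors are Euclidean. *)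

(* Complex numbers: an arbitrary numClosedFieldType C
   (an algebraically closed field with conjugation and norm, e.g. algC;
   its real elements, x \is Num.real, form a real closed field). *)
From HB Require Import structures.
From mathcomp Require Import all_boot all_order all_algebra.
Set Implicit Arguments. Unset Strict Implicit. Unset Printing Implicit Defensive.
Import Order.TTheory GRing.Theory Num.Theory.
Local Open Scope ring_scope.

Notation MI m d := {dffun forall k : 'I_m, 'I_(d k)}.

Definition dbl (m : nat) (n : 'I_m -> nat) : 'I_m -> nat := fun k => (n k + n k)%N.

Section Defs.
Variable C : numClosedFieldType.

Definition vnorm (I : finType) (v : I -> C) : C := sqrtC (\sum_(i : I) `|v i| ^+ 2).

Definition tfull (m : nat) (d : 'I_m -> nat) (T : MI m d -> C)
  (u : forall k : 'I_m, 'I_(d k) -> C) : C :=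
  \sum_(idx : MI m d) T idx * \prod_(j : 'I_m) u j (idx j).

Definition contr (m : nat) (d : 'I_m -> nat) (T : MI m d -> C)
  (u : forall k : 'I_m, 'I_(d k) -> C) (k : 'I_m) : 'I_(d k) -> C :=
  fun i => \sum_(idx : MI m d | idx k == i) T idx * \prod_(j : 'I_m | j != k) u j (idx j).


Arguments contr {m d} T u k.

Definition tinner (m : nat) (d : 'I_m -> nat) (A : MI m d -> C)
  (z : forall k : 'I_m, 'I_(d k) -> C) : C :=
  tfull (fun idx : MI m d => (A idx)^*) z.

Definition tinner_except (m : nat) (d : 'I_m -> nat) (A : MI m d -> C)
  (z : forall k : 'I_m, 'I_(d k) -> C) (k : 'I_m) : 'I_(d k) -> C :=
  contr (fun idx : MI m d => (A idx)^*) z k.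


Arguments tinner_except {m d} A z k.

Definition cplx (p : nat) (u : 'I_(p + p) -> C) : 'I_p -> C :=
  fun j => u (lshift p j) + 'i * u (rshift p j).

Definition realvec (I : finType) (v : I -> C) : Prop := forall i, v i \is Num.real.

Definition is_U_eigenpair (m : nat) (d : 'I_m -> nat) (A : MI m d -> C)
  (lambda : C) (x : forall k : 'I_m, 'I_(d k) -> C) : Prop :=
  [/\ lambda \is Num.real,
      (forall k, vnorm (x k) = 1) &
      (forall k i, tinner_except A x k i = lambda * (x k i)^*)].

Definition is_U_eigenvalue (m : nat) (d : 'I_m -> nat) (A : MI m d -> C) (lambda : C) : Prop :=
  exists x, is_U_eigenpair A lambda x.

End Defs.

Arguments contr {C m d} T u k.
Arguments tinner_except {C m d} A z k.

Definition last_mode (m : nat) (hm : (0 < m)%N) : 'I_m :=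
  Ordinal (etrans (ltn_predL m) hm).

From HB Require Import structures.
From mathcomp Require Import all_boot all_order all_algebra.
From mathcomp Require Import ring.
Set Implicit Arguments. Unset Strict Implicit. Unset Printing Implicit Defensive.
Import Order.TTheory GRing.Theory Num.Theory.
Local Open Scope ring_scope.

(* Write <T, u> for the full contraction of a tensor with a tuple of vectors.
   Everything rests on multilinearity: <T, u> = sum_i (contr T u k)_i (u k)_i.
   1. Real unit-sphere facts: Cauchy-Schwarz <g, v> <= |g| for unit v, its
      dual form (if <g, w> <= lam for all unit w then |g| <= lam), and the
      equality case (|g| <= lam = <g, v> forces g = lam v).
   2. Critical points: a maximizer u of <T, .> over products of real unit
      spheres with value lam satisfies contr T u k = lam u_k in every mode k.
   3. The maximizer of the theorem, completed in the last mode by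
      contr B uh / lambda, is such a maximizer of <B, .>, and the maximum of
      <B, .> is lambda.
   4. Transfer to C: realify/cplx identify C^p with R^{2p} isometrically, the
      contraction of B is the conjugate of the realified contraction of
      conj A, and after a phase rotation |<A, z>| <= lambda for unit z.
   The theorem follows: step 2 gives the U-eigenpair, and every U-eigenvalue
   mu equals <A, x> for its eigentuple x, hence mu <= lambda by step 4. *)

Section Tensor.
Variables (C : numClosedFieldType) (m : nat) (d : 'I_m -> nat).
Implicit Types (T : MI m d -> C) (u v : forall k : 'I_m, 'I_(d k) -> C).

Definition upd u k (w : 'I_(d k) -> C) : forall j : 'I_m, 'I_(d j) -> C :=
  @dfwith 'I_m (fun j => 'I_(d j) -> C) u k w.
Arguments upd u k w : clear implicits.

Lemma upd_in u (k : 'I_m) (w : 'I_(d k) -> C) : upd u k w k = w.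
Proof. exact: dfwith_in. Qed.

Lemma upd_out u (k : 'I_m) (w : 'I_(d k) -> C) j : k != j -> upd u k w j = u j.
Proof. exact: dfwith_out. Qed.

Lemma upd_ind (P : forall j : 'I_m, ('I_(d j) -> C) -> Prop) u (k : 'I_m)
    (w : 'I_(d k) -> C) :
  P k w -> (forall j, k != j -> P j (u j)) -> forall j, P j (upd u k w j).
Proof.
move=> Pw Pu j; case: (eqVneq k j) => [<-|ne]; first by rewrite upd_in.
by rewrite upd_out //; apply: Pu.
Qed.

Lemma contr_eq T u v k : (forall j, j != k -> forall i, u j i = v j i) ->
  forall i, contr T u k i = contr T v k i.
Proof.
move=> h i; rewrite /contr; apply: eq_bigr => idx _; congr (_ * _).
by apply: eq_bigr => j hj; rewrite h.
Qed.

Lemma tfull_eq T u v : (forall j i, u j i = v j i) -> tfull T u = tfull T v.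
Proof.
move=> h; rewrite /tfull; apply: eq_bigr => idx _; congr (_ * _).
by apply: eq_bigr => j _; rewrite h.
Qed.

Lemma tfull_contr T u k : tfull T u = \sum_i contr T u k i * u k i.
Proof.
rewrite /tfull /contr (partition_big (fun idx : MI m d => idx k) predT) //=.
apply: eq_bigr => i _; rewrite big_distrl /=; apply: eq_bigr => idx /eqP hi.
by rewrite (bigD1 k) //= hi [u k i * _]mulrC mulrA.
Qed.

Lemma tfull_upd T u (k : 'I_m) (w : 'I_(d k) -> C) :
  tfull T (upd u k w) = \sum_i contr T u k i * w i.
Proof.
rewrite (tfull_contr _ _ k) upd_in; apply: eq_bigr => i _; congr (_ * _).
by apply: contr_eq => j hj i'; rewrite upd_out // eq_sym.
Qed.

Lemma contr_real T u k : (forall idx, T idx \is Num.real) ->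
  (forall j, j != k -> realvec (u j)) -> realvec (contr T u k).
Proof.
move=> hT hu i; apply: rpred_sum => idx _; rewrite rpredM ?hT //.
by apply: rpred_prod => j hj; apply: hu.
Qed.

End Tensor.
Arguments upd {C m d} u k w _.

Section RealSphere.
Variables (C : numClosedFieldType) (I : finType).
Implicit Types (g v w : I -> C).

Lemma vnorm_ge0 g : 0 <= vnorm g.
Proof. by rewrite sqrtC_ge0 sumr_ge0 // => i _; rewrite exprn_ge0. Qed.

Lemma vnorm_sq g : vnorm g ^+ 2 = \sum_i `|g i| ^+ 2.
Proof. exact: sqrtCK. Qed.

Lemma vnorm1 g : vnorm g = 1 -> \sum_i `|g i| ^+ 2 = 1.
Proof. by move=> h; rewrite -vnorm_sq h expr1n. Qed.

Lemma vnorm0 g : vnorm g = 0 -> forall i, g i = 0.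
Proof.
move=> h i; have /psumr_eq0P h2 : \sum_i `|g i| ^+ 2 = 0 by rewrite -vnorm_sq h expr0n.
have := h2 (fun i _ => exprn_ge0 2 (normr_ge0 (g i))) i isT.
by move/eqP; rewrite sqrf_eq0 normr_eq0 => /eqP.
Qed.

Lemma sq_expand g v a : realvec g -> realvec v -> a \is Num.real ->
  \sum_i `|g i - a * v i| ^+ 2 =
  \sum_i `|g i| ^+ 2 - 2%:R * a * \sum_i g i * v i + a ^+ 2 * \sum_i `|v i| ^+ 2.
Proof.
move=> hg hv ha.
have e i : `|g i - a * v i| ^+ 2 =
   `|g i| ^+ 2 - 2%:R * a * (g i * v i) + a ^+ 2 * `|v i| ^+ 2.
  by rewrite !real_normK ?rpredB ?rpredM ?hg ?hv //; ring.
by rewrite (eq_bigr _ (fun i _ => e i)) big_split /= sumrB -!mulr_sumr.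
Qed.

Lemma dot_le_vnorm g v : realvec g -> realvec v ->
  \sum_i `|v i| ^+ 2 = 1 -> \sum_i g i * v i <= vnorm g.
Proof.
move=> hg hv hv1; set a := vnorm g; set S := \sum_i g i * v i.
have a0 : 0 <= a := vnorm_ge0 g.
have := sq_expand hg hv (ger0_real a0); rewrite hv1 mulr1 -(vnorm_sq g) -/a -/S => e.
have h0 : 0 <= 2%:R * a * (a - S).
  have -> : 2%:R * a * (a - S) = a ^+ 2 - 2%:R * a * S + a ^+ 2 by ring.
  by rewrite -e sumr_ge0 // => i _; rewrite exprn_ge0.
have [az|anz] := eqVneq a 0.
  by rewrite /S big1 ?az // => i _; rewrite (vnorm0 az) mul0r.
have a2 : 0 < 2%:R * a by rewrite mulr_gt0 // lt_def anz a0.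
by move: h0; rewrite pmulr_rge0 // subr_ge0.
Qed.

Lemma normalized_unit g : vnorm g != 0 -> \sum_i `|g i / vnorm g| ^+ 2 = 1.
Proof.
move=> gn; rewrite (eq_bigr (fun i => `|g i| ^+ 2 / vnorm g ^+ 2)); last first.
  by move=> i _; rewrite normrM normfV (ger0_norm (vnorm_ge0 g)) exprMn exprVn.
by rewrite -mulr_suml -vnorm_sq divff // expf_neq0.
Qed.

Lemma normalized_dot g : realvec g -> vnorm g != 0 ->
  \sum_i g i * (g i / vnorm g) = vnorm g.
Proof.
move=> hg gn; rewrite (eq_bigr (fun i => `|g i| ^+ 2 / vnorm g)); last first.
  by move=> i _; rewrite mulrA -expr2 real_normK ?hg.
by rewrite -mulr_suml -vnorm_sq expr2 mulrK // unitfE.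
Qed.

Lemma vnorm_le_of_dot_le g lam : realvec g -> 0 <= lam ->
  (forall w, realvec w -> \sum_i `|w i| ^+ 2 = 1 -> \sum_i g i * w i <= lam) ->
  vnorm g <= lam.
Proof.
move=> hg lam0 hmax; have [gz|gn] := eqVneq (vnorm g) 0; first by rewrite gz.
rewrite -(normalized_dot hg gn); apply: hmax; last exact: normalized_unit.
by move=> i; rewrite rpredM ?rpredV ?hg // ger0_real ?vnorm_ge0.
Qed.

Lemma eq_of_dot_eq_bound g v lam : realvec g -> realvec v ->
  \sum_i `|v i| ^+ 2 = 1 -> vnorm g <= lam -> \sum_i g i * v i = lam ->
  forall i, g i = lam * v i.
Proof.
move=> hg hv hv1 gle hgv.
have lam0 : 0 <= lam := le_trans (vnorm_ge0 g) gle.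
have := sq_expand hg hv (ger0_real lam0); rewrite hv1 mulr1 hgv -(vnorm_sq g) => e.
have s0 : \sum_i `|g i - lam * v i| ^+ 2 = 0.
  apply/le_anti; rewrite sumr_ge0 ?andbT; last by move=> i _; rewrite exprn_ge0.
  rewrite e; have -> : vnorm g ^+ 2 - 2%:R * lam * lam + lam ^+ 2
    = vnorm g ^+ 2 - lam ^+ 2 by ring.
  by rewrite subr_le0 !expr2 ler_pM ?vnorm_ge0.
move=> i; have := psumr_eq0P (fun i _ => exprn_ge0 2 (normr_ge0 _)) s0 (i := i) isT.
by move/eqP; rewrite sqrf_eq0 normr_eq0 subr_eq0 => /eqP.
Qed.

End RealSphere.

Section Critical.
Variables (C : numClosedFieldType) (m : nat) (d : 'I_m -> nat) (T : MI m d -> C).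
Hypothesis hT : forall idx, T idx \is Num.real.

Definition unit_tuple (u : forall k : 'I_m, 'I_(d k) -> C) : Prop :=
  forall k, realvec (u k) /\ vnorm (u k) = 1.

Lemma unit_tuple_upd u (k : 'I_m) (w : 'I_(d k) -> C) :
  unit_tuple u -> realvec w -> vnorm w = 1 -> unit_tuple (upd u k w).
Proof.
move=> hu hw w1.
by apply: (upd_ind (P := fun j f => realvec f /\ vnorm f = 1)) => // j _; apply: hu.
Qed.

(* If, with all vectors but the k0-th fixed on unit spheres, the mode-k0
   contraction has norm at most lam, then <T, .> is at most lam on unit
   tuples (Cauchy-Schwarz in mode k0). *)
Lemma tfull_le_of_contr_le (k0 : 'I_m) lam :
  (forall u, (forall k, k != k0 -> realvec (u k)) ->
     (forall k, k != k0 -> vnorm (u k) = 1) -> vnorm (contr T u k0) <= lam) ->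
  forall u, unit_tuple u -> tfull T u <= lam.
Proof.
move=> hmax u hu; rewrite (tfull_contr _ _ k0).
apply: le_trans (dot_le_vnorm _ _ _) (hmax u _ _) => //.
- by apply: contr_real => // j _; case: (hu j).
- by case: (hu k0).
- by apply: vnorm1; case: (hu k0).
- by move=> k _; case: (hu k).
- by move=> k _; case: (hu k).
Qed.

Lemma maximizer_critical u lam : unit_tuple u -> 0 <= lam ->
  (forall v, unit_tuple v -> tfull T v <= lam) -> tfull T u = lam ->
  forall k i, contr T u k i = lam * u k i.
Proof.
move=> hu lam0 hmax hlam k.
have [ukR uk1] := hu k.
apply: eq_of_dot_eq_bound (vnorm1 uk1) _ _ => //.
- by apply: contr_real => // j _; case: (hu j).
- apply: vnorm_le_of_dot_le lam0 _ => [|w wR w1].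
    by apply: contr_real => // j _; case: (hu j).
  rewrite -tfull_upd; apply/hmax/unit_tuple_upd => //.
  by rewrite /vnorm w1 sqrtC1.
- by rewrite -tfull_contr.
Qed.

Lemma completion_unit_tuple (k0 : 'I_m) u :
  (forall k, k != k0 -> realvec (u k)) -> (forall k, k != k0 -> vnorm (u k) = 1) ->
  let g := contr T u k0 in vnorm g != 0 ->
  unit_tuple (upd u k0 (fun i => g i / vnorm g)) /\
  tfull T (upd u k0 (fun i => g i / vnorm g)) = vnorm g.
Proof.
move=> uR u1 g gn; have gR : realvec g by apply: contr_real.
split; last by rewrite tfull_upd normalized_dot.
apply: (upd_ind (P := fun j f => realvec f /\ vnorm f = 1)).
  split; first by move=> i; rewrite rpredM ?rpredV ?gR // ger0_real ?vnorm_ge0.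
  by rewrite /vnorm normalized_unit ?sqrtC1.
by move=> j ne; rewrite eq_sym in ne; split; [apply: uR | apply: u1].
Qed.

End Critical.

Section Complexify.
Variable C : numClosedFieldType.

Definition realify (p : nat) (v : 'I_p -> C) : 'I_(p + p) -> C :=
  fun i => match split i with inl j => 'Re (v j) | inr j => 'Im (v j) end.

Lemma realify_l p (v : 'I_p -> C) j : realify v (lshift p j) = 'Re (v j).
Proof. by rewrite /realify (@unsplitK p p (inl j)). Qed.

Lemma realify_r p (v : 'I_p -> C) j : realify v (rshift p j) = 'Im (v j).
Proof. by rewrite /realify (@unsplitK p p (inr j)). Qed.

Lemma realify_real p (v : 'I_p -> C) : realvec (realify v).
Proof. by move=> i; rewrite /realify; case: split => j; rewrite ?Creal_Re ?Creal_Im. Qed.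

Lemma cplx_realify p (v : 'I_p -> C) j : cplx (realify v) j = v j.
Proof. by rewrite /cplx realify_l realify_r -Crect. Qed.

Lemma vnorm_realify p (v : 'I_p -> C) : vnorm (realify v) = vnorm v.
Proof.
rewrite /vnorm big_split_ord /= -big_split /=; congr sqrtC; apply: eq_bigr => j _.
rewrite realify_l realify_r [RHS]normC2_Re_Im.
by rewrite (real_normK (Creal_Re _)) (real_normK (Creal_Im _)).
Qed.

Lemma vnorm_cplx p (v : 'I_(p + p) -> C) : realvec v -> vnorm (cplx v) = vnorm v.
Proof.
move=> hv; rewrite /vnorm [in RHS]big_split_ord /= -big_split /=; congr sqrtC.
by apply: eq_bigr => j _; rewrite /cplx normC2_rect ?hv // !real_normK ?hv.
Qed.

Lemma Re_dot_cplx p (c : 'I_p -> C) (w : 'I_(p + p) -> C) : realvec w ->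
  'Re (\sum_j c j * cplx w j) = \sum_i realify (fun j => (c j)^*) i * w i.
Proof.
move=> hw; rewrite raddf_sum big_split_ord /= -big_split /=; apply: eq_bigr => j _.
rewrite realify_l realify_r Re_conj Im_conj /cplx mulrDr raddfD /= ReMr ?hw //.
by rewrite mulrCA ReMil ImMr ?hw // mulNr.
Qed.

Definition basis_vec (I : finType) (i0 : I) : I -> C := fun i => (i == i0)%:R.

Lemma dot_basis_vec (I : finType) (F : I -> C) i0 : \sum_i F i * basis_vec i0 i = F i0.
Proof.
rewrite (bigD1 i0) //= /basis_vec eqxx mulr1 big1 ?addr0 // => i /negbTE ->.
by rewrite mulr0.
Qed.

Lemma basis_vec_real (I : finType) (i0 : I) : realvec (basis_vec i0).
Proof. by move=> i; rewrite /basis_vec; case: (i == i0); rewrite ?rpred0 ?rpred1. Qed.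

Lemma vnorm_basis_vec p (i0 : 'I_p) : vnorm (basis_vec i0) = 1.
Proof.
rewrite /vnorm (bigD1 i0) //= /basis_vec eqxx normr1 expr1n big1 ?addr0 ?sqrtC1 //.
by move=> i /negbTE ->; rewrite normr0 expr0n.
Qed.

Lemma tinner_basis_vec m (n : 'I_m -> nat) (A : MI m n -> C) (idx : MI m n) :
  tinner A (fun k => basis_vec (idx k)) = (A idx)^*.
Proof.
rewrite /tinner /tfull (bigD1 idx) //= big1 ?mulr1; last first.
  by move=> j _; rewrite /basis_vec eqxx.
rewrite big1 ?addr0 // => idx' hne.
have [j hj] : exists j, idx' j != idx j.
  case: (pickP (fun j => idx' j != idx j)) => [j hj|h]; first by exists j.
  by case/eqP: hne; apply/ffunP => j; move/negbFE/eqP: (h j).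
by rewrite (bigD1 j) //= /basis_vec (negbTE hj) mul0r mulr0.
Qed.

Lemma U_eigenvalue_value m (n : 'I_m -> nat) (A : MI m n -> C) (k0 : 'I_m) mu x :
  is_U_eigenpair A mu x -> tinner A x = mu.
Proof.
case=> _ xn xe; rewrite /tinner (tfull_contr _ _ k0).
rewrite (eq_bigr (fun i => mu * `|x k0 i| ^+ 2)); last first.
  by move=> i _; rewrite -/(tinner_except A x k0 i) xe normCKC mulrA.
by rewrite -mulr_sumr (vnorm1 (xn k0)) mulr1.
Qed.

Lemma bound_pos m (n : 'I_m -> nat) (A : MI m n -> C) lam :
  (exists idx, A idx != 0) ->
  (forall z : forall k, 'I_(n k) -> C, (forall k, vnorm (z k) = 1) -> `|tinner A z| <= lam) ->
  0 < lam.
Proof.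
case=> idx hidx hbound.
apply: lt_le_trans (hbound _ (fun k => vnorm_basis_vec (idx k))).
by rewrite tinner_basis_vec norm_conjC normr_gt0.
Qed.

End Complexify.
Arguments basis_vec {C I} i0 _.
Arguments basis_vec_real {C I} i0 _.

Section RealModel.
Variables (C : numClosedFieldType) (m : nat) (n : 'I_m -> nat)
  (A : MI m n -> C) (B : MI m (dbl n) -> C).
Hypothesis hB : forall u : forall k : 'I_m, 'I_(dbl n k) -> C,
  (forall k, realvec (u k)) -> tfull B u = 'Re (tinner A (fun k => cplx (u k))).

(* The mode-k contraction of B at real u is the realified conjugate of the
   mode-k contraction of conj A at cplx u (compare coordinates on basis vectors). *)
Lemma contr_B_realify (u : forall k : 'I_m, 'I_(dbl n k) -> C)
    (hu : forall k, realvec (u k)) k :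
  let c := tinner_except A (fun k => cplx (u k)) k in
  forall i, contr B u k i = realify (fun j => (c j)^*) i.
Proof.
move=> c i0; pose e := basis_vec i0 : 'I_(dbl n k) -> C.
have hr : forall j, realvec (upd u k e j).
  by apply: (upd_ind (P := fun j f => realvec f)); [exact: basis_vec_real | move=> j _].
have := hB hr; rewrite tfull_upd dot_basis_vec => ->.
rewrite /tinner (@tfull_eq _ _ _ _ _ (upd (fun k => cplx (u k)) k (cplx e))); last first.
  move=> j; case: (eqVneq k j) => [<-|ne] i; first by rewrite !upd_in.
  by rewrite !upd_out.
by rewrite tfull_upd (Re_dot_cplx c (basis_vec_real i0)) dot_basis_vec.
Qed.

Lemma tinner_except_cplx (u : forall k : 'I_m, 'I_(dbl n k) -> C)
    (hu : forall k, realvec (u k)) k j :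
  tinner_except A (fun k => cplx (u k)) k j = (cplx (contr B u k) j)^*.
Proof.
by rewrite /cplx !(contr_B_realify hu) realify_l realify_r -Crect conjCK.
Qed.

Lemma U_eigenpair_of_critical (u : forall k : 'I_m, 'I_(dbl n k) -> C) lam
    (z : forall k : 'I_m, 'I_(n k) -> C) :
  unit_tuple u -> lam \is Num.real ->
  (forall k i, contr B u k i = lam * u k i) ->
  (forall k i, z k i = cplx (u k) i) -> is_U_eigenpair A lam z.
Proof.
move=> hu lamR eig zE; have uR k : realvec (u k) by case: (hu k).
split => // [k|k i].
  case: (hu k) => _ <-; rewrite -(vnorm_cplx (uR k)) /vnorm; congr sqrtC.
  by apply: eq_bigr => i _; rewrite zE.
rewrite /tinner_except (@contr_eq _ _ _ _ _ (fun k => cplx (u k))); last first.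
  by move=> j _ i'; rewrite zE.
rewrite -/(tinner_except A (fun k => cplx (u k)) k i) tinner_except_cplx //.
have -> : cplx (contr B u k) i = lam * cplx (u k) i by rewrite /cplx !eig mulrDr mulrCA.
by rewrite rmorphM /= conj_Creal // zE.
Qed.

(* If <B, .> <= lam on real unit tuples, then |<A, z>| <= lam on complex unit
   tuples: rotate z in one mode by a phase making <A, z> real nonnegative,
   then realify. *)
Lemma tinner_bound (k0 : 'I_m) lam :
  (forall u, unit_tuple u -> tfull B u <= lam) ->
  forall z : forall k, 'I_(n k) -> C, (forall k, vnorm (z k) = 1) -> `|tinner A z| <= lam.
Proof.
move=> hmax z hz; set f := tinner A z.
pose w : C := if f == 0 then 1 else `|f| / f.
have wf : w * f = `|f|.
  by rewrite /w; case: eqP => [->|/eqP fn]; [rewrite mulr0 normr0 | rewrite divfK].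
have w1 : `|w| = 1.
  rewrite /w; case: eqP => [_|/eqP fn]; first by rewrite normr1.
  by rewrite normrM normfV normr_id divff // normr_eq0.
pose z' := fun j (i : 'I_(n j)) => (if j == k0 then w else 1) * z j i.
have ef : tinner A z' = `|f|.
  rewrite -wf /f /tinner (tfull_contr _ _ k0) [in RHS](tfull_contr _ _ k0) mulr_sumr.
  apply: eq_bigr => i _; rewrite /z' eqxx mulrCA; congr (_ * (_ * _)).
  by apply: contr_eq => j hj i'; rewrite (negbTE hj) mul1r.
have nz' k : vnorm (z' k) = 1.
  rewrite -(hz k) /vnorm; congr sqrtC; apply: eq_bigr => i _.
  by rewrite /z'; case: (k == k0); rewrite normrM ?w1 ?normr1 mul1r.
pose u := fun j => realify (z' j) : 'I_(dbl n j) -> C.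
have uR k : realvec (u k) by apply: realify_real.
have := hB uR.
rewrite /tinner (@tfull_eq _ _ _ _ _ z'); last by move=> j i; rewrite /u cplx_realify.
rewrite -/(tinner A z') ef (Creal_ReP _ (normr_real _)) => <-.
by apply: hmax => k; split; rewrite // /u vnorm_realify.
Qed.

End RealModel.

Theorem theorem3p2 (C : numClosedFieldType) (m : nat) (hm : (2 <= m)%N)
  (n : 'I_m -> nat)
  (A : MI m n -> C) (hA : exists idx, A idx != 0)
  (B : MI m (dbl n) -> C) (hBreal : forall idx, B idx \is Num.real)
  (hB : forall u : forall k : 'I_m, 'I_(dbl n k) -> C,
          (forall k, realvec (u k)) ->
          tfull B u = 'Re (tinner A (fun k => cplx (u k))))
  (uh : forall k : 'I_m, 'I_(dbl n k) -> C)
  (huh_real : forall k, k != last_mode (ltnW hm) -> realvec (uh k))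
  (huh_norm : forall k, k != last_mode (ltnW hm) -> vnorm (uh k) = 1)
  (huh_max : forall u : forall k : 'I_m, 'I_(dbl n k) -> C,
      (forall k, k != last_mode (ltnW hm) -> realvec (u k)) ->
      (forall k, k != last_mode (ltnW hm) -> vnorm (u k) = 1) ->
      vnorm (contr B u (last_mode (ltnW hm))) <= vnorm (contr B uh (last_mode (ltnW hm))))
  (lambda : C) (hlambda : lambda = vnorm (contr B uh (last_mode (ltnW hm))))
  (zh : forall k : 'I_m, 'I_(n k) -> C)
  (hzh : forall k, k != last_mode (ltnW hm) -> zh k = cplx (uh k))
  (hzh_last : zh (last_mode (ltnW hm)) =
     cplx (fun i => contr B uh (last_mode (ltnW hm)) i / lambda)) :
  is_U_eigenpair A lambda zh /\
  (forall mu, is_U_eigenvalue A mu -> mu <= lambda).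
Proof.
set k0 := last_mode (ltnW hm) in huh_real huh_norm huh_max hlambda hzh hzh_last *.
rewrite -hlambda in huh_max.
have Bmax := tfull_le_of_contr_le hBreal huh_max.
have Abound := tinner_bound hB k0 Bmax.
have lam0 : 0 < lambda := bound_pos hA Abound.
have lamn0 : vnorm (contr B uh k0) != 0 by rewrite -hlambda gt_eqF.
have [uh'_unit uh'_val] := completion_unit_tuple hBreal huh_real huh_norm lamn0.
rewrite -hlambda in uh'_unit uh'_val.
set uh' := upd uh k0 _ in uh'_unit uh'_val.
have eig := maximizer_critical hBreal uh'_unit (ltW lam0) Bmax uh'_val.
split.
  apply: (U_eigenpair_of_critical hB uh'_unit (gtr0_real lam0) eig).
  apply: (upd_ind (P := fun j f => forall i, zh j i = cplx f i)) => [i|j ne i].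
    by rewrite hzh_last.
  by rewrite hzh // eq_sym.
move=> mu [x hx]; have [muR xn _] := hx.
rewrite -(U_eigenvalue_value k0 hx) in muR *.
exact: le_trans (real_ler_norm muR) (Abound _ xn).
Qed.
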